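(* Let $\Sigma$ be a non-empty finite or countably infinite alphabet and let $\mu$ be a probability map over $\Sigma$ that is not induced by any Bernoulli distribution on $\Sigma$. Then there exists a finite word $w\in\Sigma^*$ such that for every $\mu$-distributed $\alpha\in\Sigma^\omega$, the Postnikova strategy $\mathcal S_w=\{vw: v\in\Sigma^*\}$ selects from $\alpha$ an infinite sequence $\mathcal S_w[\alpha]$ that is not $\mu$-distributed.
   Context: A probability map over $\Sigma$ is $\mu:\Sigma^+\to[0,1]$ with $\sum_{w\in\Sigma^n}\mu(w)=1$ for each $n\ge1$ (convention $\mu(\lambda)=1$). $\mu$ is induced by a Bernoulli distribution $p:\Sigma\to[0,1]$ with $\sum_a p(a)=1$ if $\mu(a_1\cdots a_n)=\prod_i p(a_i)$ for all words. $\#_w(v)$ is the number of (possibly overlapping) occurrences of $w$ as a contiguous block in $v$; $\alpha$ is $\mu$-distributed if $\lim_{N\to\infty}\#_w(\alpha|_{\le N})/N=\mu(w)$ for all $w\in\Sigma^+$, where $\alpha|_{\le N}$ is the length-$N$ prefix. For a strategy $S\subseteq\Sigma^*$, $S[\alpha]$ is the subsequence of those $\alpha_i$ with $\alpha_1\cdots\alpha_{i-1}\in S$. *)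

From HB Require Import structures.
From mathcomp Require Import all_boot all_order all_algebra.
From mathcomp Require Import all_classical all_reals all_analysis.
Set Implicit Arguments. Unset Strict Implicit. Unset Printing Implicit Defensive.
Import Order.TTheory GRing.Theory Num.Theory.
Import numFieldNormedType.Exports.
Local Open Scope classical_set_scope.
Local Open Scope ring_scope.

(* Words over Sigma are [seq Sigma]; infinite sequences are [nat -> Sigma]
   (0-indexed: alpha 0 is the paper's alpha_1). *)

(* A probability map: mu : Sigma^+ -> [0,1], summing to 1 on each Sigma^n,
   n >= 1 (sum taken as a nonnegative extended-real sum, since Sigma may be
   countably infinite), with the convention mu(lambda) = 1. *)
Definition prob_map (R : realType) (Sigma : countType) (mu : seq Sigma -> R) : Prop :=
  mu [::] = 1 /\
  (forall w : seq Sigma, w != [::] -> 0 <= mu w <= 1) /\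
  (forall n : nat, (1 <= n)%N ->
     (\esum_(w in [set w : seq Sigma | size w = n]) (mu w)%:E = 1)%E).

Definition bernoulli_induced (R : realType) (Sigma : countType) (mu : seq Sigma -> R) : Prop :=
  exists p : Sigma -> R,
    (forall a, 0 <= p a <= 1) /\
    (\esum_(a in [set: Sigma]) (p a)%:E = 1)%E /\
    (forall w : seq Sigma, w != [::] -> mu w = \prod_(a <- w) p a).

Definition occ (Sigma : countType) (w v : seq Sigma) : nat :=
  count (fun i => (i + size w <= size v)%N && (take (size w) (drop i v) == w))
        (iota 0 (size v)).

Definition prefix_of (Sigma : Type) (alpha : nat -> Sigma) (N : nat) : seq Sigma :=
  mkseq alpha N.

Definition mu_distributed (R : realType) (Sigma : countType)
    (mu : seq Sigma -> R) (alpha : nat -> Sigma) : Prop :=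
  forall w : seq Sigma, w != [::] ->
    (fun N : nat => (occ w (prefix_of alpha N))%:R / N%:R) @ \oo --> mu w.

(* Position i (0-indexed) is selected by strategy S iff the preceding prefix
   alpha_1 ... alpha_{i-1} (= prefix_of alpha i) lies in S. *)
Definition selected (Sigma : Type) (S : seq Sigma -> Prop) (alpha : nat -> Sigma) (i : nat) : Prop :=
  S (prefix_of alpha i).

Definition postnikova (Sigma : countType) (w : seq Sigma) : seq Sigma -> Prop :=
  fun u => exists v : seq Sigma, u = v ++ w.

From HB Require Import structures.
From mathcomp Require Import all_boot all_order all_algebra.
From mathcomp Require Import all_classical all_reals all_analysis.
From mathcomp Require Import zify.
From mathcomp.algebra_tactics Require Import ring.

(* Fix a mu-distributed sequence alpha (if there is none, the statement is
   vacuous).  Along alpha, #_(u s) <= #_u for all words, so mu(u s) <= mu(u):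
   a word of mu-weight 0 has only weight-0 extensions.  Hence, if
   mu(w b) = mu(w) mu(b) held for every word w of positive weight and every
   letter b, the letter weights p(a) = mu(a) would induce mu.  As mu is not
   Bernoulli, there are w (necessarily non-empty) and b with mu(w) > 0 and
   mu(w b) <> mu(w) mu(b).

   Take this w.  Position i is selected by S_w iff an occurrence of w ends
   just before i; since mu(w) > 0, alpha contains w with positive frequency,
   so S_w selects infinitely often.  If phi enumerates the selected positions,
   the prefix of alpha of length phi n contains exactly n+1 occurrences of w,
   and its occurrences of w b correspond to the occurrences of b among the
   first n selected letters.  So the frequency of b in S_w[alpha] is the limit
   of #_(w b) / #_w, namely mu(w b)/mu(w) <> mu(b): S_w[alpha] is not
   mu-distributed. *)

Set Implicit Arguments. Unset Strict Implicit. Unset Printing Implicit Defensive.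
Import Order.TTheory GRing.Theory Num.Theory.
Import numFieldNormedType.Exports.

Definition block (T : Type) (al : nat -> T) (j k : nat) : seq T :=
  mkseq (fun t => al (j + t)%N) k.

Lemma prefix_block (T : Type) (al : nat -> T) j k N : (j + k <= N)%N ->
  take k (drop j (prefix_of al N)) = block al j k.
Proof.
move=> jkN; rewrite /prefix_of /mkseq /block -map_drop -map_take drop_iota take_iota.
have -> : minn k (N - j) = k by lia.
by rewrite add0n -{1}(addn0 j) iotaDl -map_comp.
Qed.

Lemma occ_prefixE (T : countType) (w : seq T) (al : nat -> T) N :
  occ w (prefix_of al N) =
  count (fun j => (j + size w <= N)%N && (block al j (size w) == w)) (iota 0 N).
Proof.
rewrite /occ {1}/prefix_of size_mkseq; apply: eq_count => j /=.
by case: leqP => //= jwN; rewrite prefix_block.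
Qed.

Lemma block_rcons (T : Type) (al : nat -> T) j k :
  block al j k.+1 = rcons (block al j k) (al (j + k)%N).
Proof. by rewrite /block mkseqS. Qed.

Lemma occ_letterE (T : countType) (b : T) (beta : nat -> T) n :
  occ [:: b] (prefix_of beta n) = count (fun m => beta m == b) (iota 0 n).
Proof.
rewrite occ_prefixE; apply: eq_in_count => m; rewrite mem_iota add0n /= => mn.
by rewrite addn1 mn /block /mkseq /= addn0 eqseq_cons andbT.
Qed.

(* Every occurrence of u ++ s starts an occurrence of u. *)
Lemma occ_catr_le (T : countType) (u s v : seq T) : (occ (u ++ s) v <= occ u v)%N.
Proof.
rewrite /occ; apply: sub_count => i /andP[uv /eqP blk_us].
rewrite size_cat in uv blk_us; apply/andP; split; first lia.
by rewrite -(@take_takel _ (size u) (size u + size s)) ?leq_addr // blk_us take_size_cat.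
Qed.

Lemma prefix_split (T : Type) (al : nat -> T) k i : (k <= i)%N ->
  prefix_of al i = prefix_of al (i - k) ++ block al (i - k) k.
Proof.
move=> ki; rewrite /prefix_of /mkseq /block -{1}(subnK ki) iotaD map_cat.
by rewrite add0n -{2}(addn0 (i - k)) iotaDl -map_comp.
Qed.

Lemma selected_postnikovaP (T : countType) (w : seq T) (al : nat -> T) i :
  selected (postnikova w) al i <->
  (size w <= i)%N /\ block al (i - size w) (size w) = w.
Proof.
split=> [[v alv]|[wi blk_w]]; last first.
  by exists (prefix_of al (i - size w)); rewrite -{2}blk_w -prefix_split.
have size_i : i = (size v + size w)%N by rewrite -size_cat -alv size_mkseq.
have wi : (size w <= i)%N by rewrite size_i leq_addl.
split=> //; move: alv; rewrite (prefix_split al wi) => /eqP.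
by rewrite eqseq_cat ?size_mkseq ?size_i ?addnK // => /andP[_ /eqP].
Qed.

Lemma count_iota_ltn (p : pred nat) M N : (M <= N)%N ->
  count (fun j => (j < M)%N && p j) (iota 0 N) = count p (iota 0 M).
Proof.
move=> MN; rewrite -(filter_iota_ltn 0 MN) count_filter.
by apply: eq_count => j /=; rewrite andbC.
Qed.

Lemma enumeration_filter (P : pred nat) (f : nat -> nat) :
  (forall n, (f n < f n.+1)%N) -> (forall j, P j <-> exists m, f m = j) ->
  forall n, [seq j <- iota 0 (f n) | P j] = map f (iota 0 n).
Proof.
move=> f_incr f_enum n.
have f_mono : {mono f : m n / (m < n)%N}.
  exact/leqW_mono/leq_mono/(homo_ltn ltn_trans f_incr).
apply: (irr_sorted_eq ltn_trans ltnn).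
- exact: (sorted_filter ltn_trans _ (iota_ltn_sorted 0 _)).
- by apply: homo_sorted (iota_ltn_sorted 0 n) => ? ?; rewrite f_mono.
move=> j; rewrite mem_filter mem_iota add0n /=; apply/andP/mapP.
  by case=> /f_enum[m <-]; rewrite f_mono => mn; exists m; rewrite ?mem_iota.
case=> m; rewrite mem_iota add0n => mn ->.
by rewrite f_mono; split=> //; apply/f_enum; exists m.
Qed.

Local Open Scope classical_set_scope.
Local Open Scope ring_scope.

Section Frequencies.
Variable R : realType.

Lemma cvg_subseq_incr (u : nat -> R) (l : R) (phi : nat -> nat) :
  (forall n, (phi n < phi n.+1)%N) -> u @ \oo --> l -> (u \o phi) @ \oo --> l.
Proof.
move=> phi_incr; have phi_ge m : (m <= phi m)%N.
  by elim: m => // m IH; apply: leq_ltn_trans IH (phi_incr m).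
apply: cvg_comp => P [n _ Pn]; exists n => // m /= nm.
by apply: Pn; apply: leq_trans nm (phi_ge m).
Qed.

Lemma freq_shift (x : nat -> R) (l : R) :
  (fun n => x n / n%:R) @ \oo --> l -> (fun n => x n / n.+1%:R) @ \oo --> l.
Proof.
move=> x_cvg; rewrite -[l](subr0 l) -[X in _ - X](mulr0 l).
apply: cvg_trans (cvgB x_cvg (cvgM x_cvg (@cvg_harmonic R))).
apply: near_eq_cvg; near=> n => /=.
have n_neq0 : n%:R != 0 :> R by rewrite pnatr_eq0 -lt0n; near: n; exact: nbhs_infty_gt.
by rewrite /harmonic /= !fctE /=; field; rewrite n_neq0 andbT.
Unshelve. all: end_near.
Qed.

Lemma freq_bounded_cvg0 (x : nat -> nat) (m : nat) :
  (forall n, (x n <= m)%N) -> (fun n => (x n)%:R / n%:R) @ \oo --> (0 : R).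
Proof.
move=> x_le; rewrite -cvg_shiftS.
have harm_cvg : (fun n => m%:R * harmonic n) @ \oo --> (0 : R).
  by rewrite -(mulr0 m%:R); apply: cvgM (cvg_cst _) cvg_harmonic.
apply: squeeze_cvgr (cvg_cst 0) harm_cvg; near=> n.
by rewrite /harmonic /= divr_ge0 // ler_wpM2r ?invr_ge0 // ler_nat.
Unshelve. all: end_near.
Qed.

End Frequencies.

Section PostnikovaSelection.
Variables (T : countType) (w : seq T) (al : nat -> T) (phi : nat -> nat).
Hypothesis w_nonempty : (0 < size w)%N.
Hypothesis phi_incr : forall n, (phi n < phi n.+1)%N.
Hypothesis phi_enum : forall i, selected (postnikova w) al i <-> exists n, phi n = i.

Let k := size w.

(* The n-th occurrence of w in al starts at occ_start n. *)
Definition occ_start n := (phi n - k)%N.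

Lemma size_le_selection n : (k <= phi n)%N.
Proof.
have /selected_postnikovaP[] // : selected (postnikova w) al (phi n).
by apply/phi_enum; exists n.
Qed.

Lemma occ_start_incr n : (occ_start n < occ_start n.+1)%N.
Proof. by have := size_le_selection n; have := phi_incr n; rewrite /occ_start; lia. Qed.

Lemma occ_start_enum j : block al j k == w <-> exists m, occ_start m = j.
Proof.
split=> [/eqP blk_w|[m <-]].
  have /phi_enum[m phi_m] : selected (postnikova w) al (j + k).
    by apply/selected_postnikovaP; rewrite addnK leq_addl.
  by exists m; rewrite /occ_start phi_m addnK.
have /selected_postnikovaP[_ ->] // : selected (postnikova w) al (phi m).
by apply/phi_enum; exists m.
Qed.

Lemma count_before_occ_start (q : pred nat) n :
  count (fun j => (block al j k == w) && q j) (iota 0 (occ_start n)) =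
  count (q \o occ_start) (iota 0 n).
Proof.
rewrite -count_map -(enumeration_filter occ_start_incr occ_start_enum) count_filter.
by apply: eq_count => j /=; rewrite andbC.
Qed.

Lemma occ_at_selection n : occ w (prefix_of al (phi n)) = n.+1.
Proof.
have kn := size_le_selection n.
rewrite occ_prefixE (eq_count (a2 := fun j =>
  (j < (occ_start n).+1)%N && (block al j k == w))); last first.
  by move=> j /=; congr andb; rewrite /occ_start /k; lia.
rewrite count_iota_ltn /occ_start; last by lia.
rewrite -addn1 iotaD count_cat /= add0n.
have -> : block al (phi n - k) k == w by apply/occ_start_enum; exists n.
move: (count_before_occ_start predT n); rewrite /occ_start.
rewrite (eq_count (a2 := fun j => block al j k == w)) => [->|j]; last by rewrite andbT.
by rewrite count_predT size_iota addn0 addn1.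
Qed.

Lemma occ_extension_at_selection b n :
  occ (w ++ [:: b]) (prefix_of al (phi n)) = occ [:: b] (prefix_of (al \o phi) n).
Proof.
have kn := size_le_selection n.
rewrite occ_letterE occ_prefixE size_cat addn1.
rewrite (eq_count (a2 := fun j => (j < occ_start n)%N &&
          ((block al j k == w) && (al (j + k)%N == b)))); last first.
  move=> j /=; rewrite block_rcons -cats1 eqseq_cat ?size_mkseq //= eqseq_cons andbT.
  by congr andb; rewrite /occ_start /k; lia.
rewrite count_iota_ltn /occ_start ?leq_subr // -/(occ_start n) count_before_occ_start.
by apply: eq_count => m /=; rewrite /occ_start subnK ?size_le_selection.
Qed.

Variables (R : realType) (mu : seq T -> R).
Hypothesis al_distr : mu_distributed mu al.
Hypothesis mu_w_gt0 : 0 < mu w.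

(* The frequency of b in S_w[al] is the limit of #_(w b) / #_w at the
   selected positions, that is mu(w b) / mu(w). *)
Lemma selected_letter_freq b :
  (fun n => (occ [:: b] (prefix_of (al \o phi) n))%:R / n.+1%:R) @ \oo -->
  mu (w ++ [:: b]) / mu w.
Proof.
have w_neq0 : w != [::] by rewrite -size_eq0 -lt0n.
have wb_neq0 : w ++ [:: b] != [::] by rewrite cats1 -size_eq0 size_rcons.
have wb_cvg := cvg_subseq_incr phi_incr (al_distr wb_neq0).
have w_cvg := cvg_subseq_incr phi_incr (al_distr w_neq0).
apply: cvg_trans (cvgM wb_cvg (cvgV _ w_cvg)); last by rewrite gt_eqF.
apply: near_eq_cvg; near=> n => /=.
rewrite -occ_extension_at_selection occ_at_selection.
have phi_neq0 : (phi n)%:R != 0 :> R.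
  by rewrite pnatr_eq0 -lt0n (leq_trans w_nonempty (size_le_selection n)).
by rewrite /=; field; rewrite phi_neq0 andbT nat1r pnatr_eq0.
Unshelve. all: end_near.
Qed.

Lemma selection_multiplicative b : mu_distributed mu (al \o phi) ->
  mu (w ++ [:: b]) = mu w * mu [:: b].
Proof.
move=> sel_distr.
have := norm_cvg_unique (@selected_letter_freq b) (freq_shift (sel_distr [:: b] isT)).
by move=> /(_ _) <-; rewrite mulrC divfK ?gt_eqF.
Qed.

End PostnikovaSelection.

Section ProbabilityMaps.
Variables (R : realType) (T : countType) (mu : seq T -> R).

Lemma mu_catr_le (al : nat -> T) u s :
  mu_distributed mu al -> u != [::] -> mu (u ++ s) <= mu u.
Proof.
move=> al_distr u_neq0; have us_neq0 : u ++ s != [::] by case: u u_neq0.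
apply: ler_cvg_to (al_distr _ us_neq0) (al_distr _ u_neq0) _.
by apply: nearW => N; rewrite ler_wpM2r ?invr_ge0 // ler_nat occ_catr_le.
Qed.

Lemma esum_letters : prob_map mu -> (\esum_(a in [set: T]) (mu [:: a])%:E = 1)%E.
Proof.
case=> _ [_ /(_ 1%N (leqnn 1))].
rewrite (@reindex_esum _ _ _ [set: T] _ (fun a => [:: a])) //.
split=> [a _ //|a c _ _ [] //|].
by move=> [|a [|? ?]] //= _; exists a.
Qed.

(* If mu multiplies along every one-letter extension of a word of positive
   weight, then mu is induced by its letter weights; words of weight 0 only
   have extensions of weight 0 by monotonicity. *)
Lemma bernoulli_of_multiplicative (al : nat -> T) :
  prob_map mu -> mu_distributed mu al ->
  (forall w b, w != [::] -> 0 < mu w -> mu (w ++ [:: b]) = mu w * mu [:: b]) ->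
  bernoulli_induced mu.
Proof.
move=> mu_prob al_distr mu_mult; have [_ [mu_01 _]] := mu_prob.
exists (fun a => mu [:: a]); split=> [a|]; first exact: mu_01.
split; first exact: esum_letters.
elim/last_ind => [//|u c IH _].
have [->|u_neq0] := eqVneq u [::]; first by rewrite big_seq1.
rewrite -cats1 big_cat big_seq1 /= -IH //.
have uc_neq0 : u ++ [:: c] != [::] by rewrite cats1 -size_eq0 size_rcons.
have [/andP[uc_ge0 _] /andP[u_ge0 _]] := (mu_01 _ uc_neq0, mu_01 _ u_neq0).
rewrite le_eqVlt in u_ge0; case/orP: u_ge0 => [/eqP u0|]; last exact: mu_mult.
rewrite -u0 mul0r; apply/eqP; rewrite eq_le uc_ge0 andbT u0.
exact: mu_catr_le al_distr u_neq0.
Qed.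

Lemma non_multiplicative_extension (al : nat -> T) :
  prob_map mu -> mu_distributed mu al -> ~ bernoulli_induced mu ->
  exists w b, [/\ w != [::], 0 < mu w & mu (w ++ [:: b]) != mu w * mu [:: b]].
Proof.
move=> mu_prob al_distr not_bern; apply: contrapT => no_witness; apply: not_bern.
apply: (bernoulli_of_multiplicative mu_prob al_distr) => w b w_neq0 mu_w_gt0.
apply: contrapT => mu_wb_neq; apply: no_witness; exists w, b; split=> //; exact/eqP.
Qed.

(* A word of positive weight occurs infinitely often in a mu-distributed
   sequence, so S_w selects infinitely many positions. *)
Lemma postnikova_selects_infinitely (al : nat -> T) (w : seq T) :
  mu_distributed mu al -> w != [::] -> 0 < mu w ->
  forall m, exists i, (m <= i)%N /\ selected (postnikova w) al i.
Proof.
move=> al_distr w_neq0 mu_w_gt0 m; apply: contrapT => finitely_many.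
have sel_lt i : selected (postnikova w) al i -> (i < m)%N.
  by move=> sel_i; rewrite ltnNge; apply/negP => mi; apply: finitely_many; exists i.
have occ_le N : (occ w (prefix_of al N) <= m)%N.
  rewrite occ_prefixE.
  apply: (@leq_trans (count (fun j => (j < m)%N && true) (iota 0 N))).
    apply: sub_count => j /andP[_ /eqP blk_w]; rewrite andbT.
    have /sel_lt : selected (postnikova w) al (j + size w).
      by apply/selected_postnikovaP; rewrite addnK leq_addl.
    by apply: leq_ltn_trans; apply: leq_addr.
  have [mN|Nm] := leqP m N; first by rewrite count_iota_ltn // count_predT size_iota.
  by rewrite (leq_trans (count_size _ _)) // size_iota ltnW.
have := norm_cvg_unique (al_distr _ w_neq0) (freq_bounded_cvg0 occ_le).
by move=> /(_ _) mu_w0; rewrite mu_w0 ltxx in mu_w_gt0.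
Qed.

End ProbabilityMaps.

Unset Implicit Arguments.

(* S[alpha] is represented by the (unique) increasing enumeration phi of the
   selected positions; the selected subsequence is alpha \o phi. *)
Theorem lemma4p1 (R : realType) (Sigma : countType) (a0 : Sigma)
  (mu : seq Sigma -> R) :
  prob_map mu -> ~ bernoulli_induced mu ->
  exists w : seq Sigma,
    forall alpha : nat -> Sigma, mu_distributed mu alpha ->
      (forall m : nat, exists i : nat, (m <= i)%N /\ selected (postnikova w) alpha i) /\
      (forall phi : nat -> nat,
         (forall n, (phi n < phi n.+1)%N) ->
         (forall i, selected (postnikova w) alpha i <-> exists n, phi n = i) ->
         ~ mu_distributed mu (alpha \o phi)).
Proof.
move=> mu_prob not_bern.
have [[al0 al0_distr]|no_distr] := pselect (exists al, mu_distributed mu al); last first.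
  by exists [::] => al al_distr; exfalso; apply: no_distr; exists al.
have [w [b [w_neq0 mu_w_gt0 mu_wb_neq]]] :=
  non_multiplicative_extension mu_prob al0_distr not_bern.
exists w => al al_distr; split.
  exact: postnikova_selects_infinitely al_distr w_neq0 mu_w_gt0.
move=> phi phi_incr phi_enum sel_distr; move/eqP: mu_wb_neq; apply.
have w_size_gt0 : (0 < size w)%N by rewrite lt0n size_eq0.
exact: (selection_multiplicative w_size_gt0 phi_incr phi_enum al_distr mu_w_gt0 b
  sel_distr).
Qed.
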